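(* Let $f:\mathbb{R}^n\to\mathbb{R}$ be continuously differentiable with $\nabla f$ Lipschitz continuous on $\mathbb{R}^n$, let $s$ be an integer with $0<s<n$, and let $\mathbf{x}^*$ be a CW-minimum of the problem (P): minimize $f(\mathbf{x})$ subject to $\|\mathbf{x}\|_0\le s$. Then $$|\nabla_i f(\mathbf{x}^* )|\ \begin{cases}\le L_2(f)\,M_s(\mathbf{x}^* ) & i\in I_0(\mathbf{x}^* ),\\ =0 & i\in I_1(\mathbf{x}^* ),\end{cases}$$ that is, $\mathbf{x}^*$ is an $L_2(f)$-stationary point of (P).
   Context: $\|\mathbf{x}\|_0$ is the number of nonzero components; $C_s=\{\mathbf{x}:\|\mathbf{x}\|_0\le s\}$; $I_1(\mathbf{x})=\{i:x_i\neq0\}$, $I_0(\mathbf{x})=\{i:x_i=0\}$; $M_s(\mathbf{x})$ is the $s$-th largest absolute value among the components of $\mathbf{x}$; $\mathbf{e}_i$ is the $i$-th standard basis vector. A feasible $\mathbf{x}^*$ is a coordinate-wise (CW) minimum of (P) if either $\|\mathbf{x}^*\|_0<s$ and $f(\mathbf{x}^* )=\min_{t}f(\mathbf{x}^*+t\mathbf{e}_i)$ for every $i$; or $\|\mathbf{x}^*\|_0=s$ and $f(\mathbf{x}^* )\le\min_{t}f(\mathbf{x}^*-x_i^*\mathbf{e}_i+t\mathbf{e}_j)$ for all $i\in I_1(\mathbf{x}^* )$, $j=1,\dots,n$. For $i\neq j$, $\nabla_{i,j}f(\mathbf{x})\in\mathbb{R}^2$ is the vector of the $i$-th and $j$-th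 partial derivatives, and $L_{i,j}(f)$ is a constant with $\|\nabla_{i,j}f(\mathbf{x})-\nabla_{i,j}f(\mathbf{x}+\mathbf{d})\|\le L_{i,j}(f)\|\mathbf{d}\|$ for all $\mathbf{x}\in\mathbb{R}^n$ and all $\mathbf{d}\in\mathbb{R}^n$ with at most two nonzero components (such constants exist since $\nabla f$ is Lipschitz); the local Lipschitz constant is $L_2(f)=\max_{i\neq j}L_{i,j}(f)$. For $L>0$, $\mathbf{x}^*\in C_s$ is $L$-stationary if $\mathbf{x}^*\in P_{C_s}(\mathbf{x}^*-\frac1L\nabla f(\mathbf{x}^* ))$, where $P_{C_s}(\mathbf{y})=\operatorname{argmin}_{\mathbf{x}\in C_s}\|\mathbf{x}-\mathbf{y}\|^2$; equivalently, the displayed condition with $L$ in place of $L_2(f)$. *)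

From HB Require Import structures.
From mathcomp Require Import all_boot all_order all_algebra.
From mathcomp Require Import all_classical all_reals all_analysis.
Set Implicit Arguments. Unset Strict Implicit. Unset Printing Implicit Defensive.
Import Order.TTheory GRing.Theory Num.Theory.
Import numFieldNormedType.Exports.
Local Open Scope ring_scope.

Section Defs.
Variables (R : realType) (n : nat).

Definition ebase (i : 'I_n) : 'rV[R]_n := delta_mx 0 i.

Definition l0 (x : 'rV[R]_n) : nat := #|[set i | x 0 i != 0]|.

Definition I1 (x : 'rV[R]_n) : {set 'I_n} := [set i | x 0 i != 0].
Definition I0 (x : 'rV[R]_n) : {set 'I_n} := [set i | x 0 i == 0].

Definition enorm (x : 'rV[R]_n) : R := Num.sqrt (\sum_i x 0 i ^+ 2).

Definition partial (f : 'rV[R]_n -> R) (i : 'I_n) (x : 'rV[R]_n) : R :=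
  derive f x (ebase i).

Definition grad (f : 'rV[R]_n -> R) (x : 'rV[R]_n) : 'rV[R]_n :=
  \row_i partial f i x.

(* M_s(x): the s-th largest absolute value among the components of x *)
Definition Ms (s : nat) (x : 'rV[R]_n) : R :=
  nth 0 (sort (fun a b : R => b <= a) [seq `|x 0 i| | i <- enum 'I_n]) s.-1.

Definition CW_min (f : 'rV[R]_n -> R) (s : nat) (x : 'rV[R]_n) : Prop :=
  (l0 x <= s)%N /\
  (((l0 x < s)%N /\ forall (i : 'I_n) (t : R), f x <= f (x + t *: ebase i)) \/
   ((l0 x = s) /\ forall (i : 'I_n) (j : 'I_n) (t : R), i \in I1 x ->
        f x <= f (x - x 0 i *: ebase i + t *: ebase j))).

Definition block_lipschitz (f : 'rV[R]_n -> R) (Lij : 'I_n -> 'I_n -> R) : Prop :=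
  forall (i j : 'I_n), i != j -> forall (x d : 'rV[R]_n), (l0 d <= 2)%N ->
    Num.sqrt ((partial f i x - partial f i (x + d)) ^+ 2 +
              (partial f j x - partial f j (x + d)) ^+ 2) <= Lij i j * enorm d.

(* L_2(f) = max_{i <> j} L_{i,j}(f)  (all L_{i,j} are >= 0, so 0 is a neutral default) *)
Definition L2 (Lij : 'I_n -> 'I_n -> R) : R :=
  \big[Num.max/0]_(i : 'I_n) \big[Num.max/0]_(j : 'I_n | j != i) Lij i j.

Definition in_proj_Cs (s : nat) (y x : 'rV[R]_n) : Prop :=
  (l0 x <= s)%N /\ forall z : 'rV[R]_n, (l0 z <= s)%N ->
    enorm (x - y) ^+ 2 <= enorm (z - y) ^+ 2.

(* L-stationarity (for L > 0) *)
Definition L_stationary (f : 'rV[R]_n -> R) (s : nat) (L : R) (x : 'rV[R]_n) : Prop :=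
  in_proj_Cs s (x - L^-1 *: grad f x) x.

End Defs.

From HB Require Import structures.
From mathcomp Require Import all_boot all_order all_algebra.
From mathcomp Require Import all_classical all_reals all_analysis.
From mathcomp Require Import ring lra zify.
Import Order.TTheory GRing.Theory Num.Theory.
Import numFieldNormedType.Exports.
Local Open Scope ring_scope.
Set Implicit Arguments. Unset Strict Implicit. Unset Printing Implicit Defensive.

(* Minimality of f along a coordinate line kills the corresponding partial
   derivative: on the support of x*, and everywhere if the support is not full.
   If the support is full, swap a support coordinate k out for an off-support
   coordinate i; since the displacement only moves two coordinates, the block
   Lipschitz bound gives the descent inequality
     f(x + d) <= f(x) + <grad f(x), d> + L_{k,i}/2 |d|^2,
   so 0 <= t g_i + L_2/2 (x_k^2 + t^2) for every t, i.e. |g_i| <= L_2 |x_k|.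
   Taking k with |x_k| <= M_s(x) gives the bound; and since the gradient step
   lives off the support and is dominated there by every |x_k|, hard
   thresholding the step returns x*, which is L_2-stationarity. *)

Section LineRestriction.
Variables (R : realType) (V : normedModType R).
Implicit Types (f : V -> R) (x d : V).

Lemma is_derive_line f x d t : derivable f (t *: d + x) d ->
  is_derive t 1 (fun u : R => f (u *: d + x)) ('D_d f (t *: d + x)).
Proof.
move=> fd; set g := fun u : R => f (u *: d + x).
have quotE : (fun h : R => h^-1 *: ((g \o shift t) (h *: 1) - g t)) =
    (fun h : R => h^-1 *: ((f \o shift (t *: d + x)) (h *: d) - f (t *: d + x))).
  apply/funext => h /=; congr (_ *: (f _ - _)).
  by rewrite [h%:A]mulr1 scalerDl addrA.
by apply: DeriveDef; rewrite /derivable /derive quotE.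
Qed.

Lemma derive_eq0_of_line_min f x d :
  (forall t, differentiable f (t *: d + x)) ->
  (forall t, f x <= f (x + t *: d)) -> 'D_d f x = 0.
Proof.
move=> f_diff x_min.
have g_der t := is_derive_line (@diff_derivable _ _ _ f _ d (f_diff t)).
have [] := @derive1_at_min R (fun u : R => f (u *: d + x)) (-1) 1 0 => //.
- by rewrite in_itv /= ltrN10 ltr01.
- by move=> t _; rewrite scale0r add0r addrC.
by move=> _ <-; have := g_der 0; rewrite scale0r add0r => -[_ ->].
Qed.

Lemma descent_line f x d (C : R) :
  (forall t, differentiable f (t *: d + x)) ->
  (forall u, 0 < u < 1 -> 'D_d f (u *: d + x) - 'D_d f x <= C * u) ->
  f (x + d) <= f x + 'D_d f x + C / 2.
Proof.
move=> f_diff incr.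
pose q : R -> R := ('D_d f x \*: id) + ((C / 2) \*: (id * id)).
pose phi : R -> R := (fun u => f (u *: d + x)) - q.
have phi_der (u : R) : is_derive u 1 phi
    ('D_d f (u *: d + x) - ('D_d f x *: 1 + (C / 2) *: (u *: 1 + u *: 1))).
  have := is_derive_line (@diff_derivable _ _ _ f _ d (f_diff u)).
  by move=> g_der; apply: is_deriveB.
have phi_le : phi 1 <= phi 0.
  apply: (@ler0_derive1_le_cc R phi 0 1).
  - by move=> u _; case: (phi_der u).
  - move=> u; rewrite in_itv /= => u01.
    rewrite derive1E (@derive_val _ _ _ _ _ _ _ (phi_der u)) /GRing.scale /= !mulr1.
    have := incr u u01; lra.
  - by apply: derivable_within_continuous => u _; case: (phi_der u).
  - by rewrite in_itv /= ler01 lexx.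
  - by rewrite in_itv /= ler01 lexx.
  - exact: ler01.
move: phi_le; rewrite /phi /q !fctE /= scale1r scale0r add0r [x + _]addrC.
rewrite /GRing.scale /= !mulr0 !mulr1; lra.
Qed.

End LineRestriction.

Lemma cauchy_schwarz2 (R : realType) (a b p q : R) :
  a * p + b * q <= Num.sqrt (a ^+ 2 + b ^+ 2) * Num.sqrt (p ^+ 2 + q ^+ 2).
Proof.
rewrite -sqrtrM ?addr_ge0 ?sqr_ge0 //.
have [neg|pos] := lerP (a * p + b * q) 0; first exact: le_trans neg (sqrtr_ge0 _).
rewrite -(ger0_norm (ltW pos)) -sqrtr_sqr ler_wsqrtr //.
have := sqr_ge0 (a * q - b * p); lra.
Qed.

Section TwoCoordinateDirections.
Variables (R : realType) (n : nat).
Implicit Types (f : 'rV[R]_n -> R) (x : 'rV[R]_n) (i k : 'I_n) (a b : R).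
Local Notation e := (ebase R).

Lemma ebase2E a b k i l : (a *: e k + b *: e i) 0 l = a * (l == k)%:R + b * (l == i)%:R.
Proof. by rewrite !mxE eqxx. Qed.

Lemma enorm_ebase2 a b k i : k != i ->
  enorm (a *: e k + b *: e i) = Num.sqrt (a ^+ 2 + b ^+ 2).
Proof.
move=> ki; rewrite /enorm (bigD1 k) //= (bigD1 i) 1?eq_sym //= big1; last first.
  by move=> l /andP[li lk]; rewrite ebase2E (negbTE li) (negbTE lk) !mulr0 addr0 expr0n.
by rewrite !ebase2E eqxx (negbTE ki) eq_sym (negbTE ki) eqxx !mulr1 !mulr0 !addr0 add0r.
Qed.

Lemma l0_ebase2 a b k i : (l0 (a *: e k + b *: e i) <= 2)%N.
Proof.
have supp : [set l | (a *: e k + b *: e i) 0 l != 0] \subset [set k; i].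
  apply/fintype.subsetP => l; rewrite !inE ebase2E.
  by case: (l == k); case: (l == i); rewrite ?orbT //= !mulr0 addr0 eqxx.
by apply: leq_trans (subset_leq_card supp) _; rewrite cards2; case: (k != i).
Qed.

Lemma derive_ebase2 f x a b k i : differentiable f x ->
  'D_(a *: e k + b *: e i) f x = a * partial f k x + b * partial f i x.
Proof. by move=> f_diff; rewrite /partial !deriveE // linearD !linearZ. Qed.

Lemma block_lipschitz_derive_incr f Lij x a b k i (u : R) : k != i ->
  (forall y, differentiable f y) -> block_lipschitz f Lij -> 0 <= u ->
  'D_(a *: e k + b *: e i) f (u *: (a *: e k + b *: e i) + x) -
    'D_(a *: e k + b *: e i) f x <= Lij k i * (a ^+ 2 + b ^+ 2) * u.
Proof.
move=> ki f_diff Lf u_ge0; set d := a *: e k + b *: e i.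
have ud : u *: d = (u * a) *: e k + (u * b) *: e i by rewrite scalerDr !scalerA.
have := Lf k i ki x (u *: d); rewrite ud l0_ebase2 enorm_ebase2 // => /(_ isT).
rewrite [_ + x]addrC /d !derive_ebase2 //.
set P := partial f k x; set Q := partial f i x.
set P' := partial f k _; set Q' := partial f i _ => lip.
have uab : (u * a) ^+ 2 + (u * b) ^+ 2 = u ^+ 2 * (a ^+ 2 + b ^+ 2) by ring.
rewrite uab sqrtrM ?sqr_ge0 // sqrtr_sqr ger0_norm // in lip.
have := cauchy_schwarz2 a b (P' - P) (Q' - Q).
have -> : (P' - P) ^+ 2 + (Q' - Q) ^+ 2 = (P - P') ^+ 2 + (Q - Q') ^+ 2 by ring.
have S_ge0 := sqrtr_ge0 (a ^+ 2 + b ^+ 2).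
have SS : Num.sqrt (a ^+ 2 + b ^+ 2) ^+ 2 = a ^+ 2 + b ^+ 2.
  by rewrite sqr_sqrtr // addr_ge0 ?sqr_ge0.
have key : Num.sqrt (a ^+ 2 + b ^+ 2) * (Lij k i * (u * Num.sqrt (a ^+ 2 + b ^+ 2)))
    = Lij k i * (a ^+ 2 + b ^+ 2) * u by rewrite -[in RHS]SS; ring.
have := ler_wpM2l S_ge0 lip; rewrite key; lra.
Qed.

Lemma block_descent f Lij x a b k i : k != i ->
  (forall y, differentiable f y) -> block_lipschitz f Lij ->
  f (x + (a *: e k + b *: e i)) <=
  f x + (a * partial f k x + b * partial f i x) + Lij k i / 2 * (a ^+ 2 + b ^+ 2).
Proof.
move=> ki f_diff Lf.
rewrite -derive_ebase2 // mulrAC; apply: descent_line => [t|u /andP[u_gt0 _]] //.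
exact: block_lipschitz_derive_incr (ltW u_gt0).
Qed.

End TwoCoordinateDirections.

Lemma L2_ge0 (R : realType) (n : nat) (Lij : 'I_n -> 'I_n -> R) : 0 <= L2 Lij.
Proof. exact: bigmax_ge_id. Qed.

Lemma le_L2 (R : realType) (n : nat) (Lij : 'I_n -> 'I_n -> R) k i :
  k != i -> Lij k i <= L2 Lij.
Proof.
move=> ki; apply: (@bigmax_sup _ _ _ _ k) => //.
by apply: (@bigmax_sup _ _ _ _ i) => //; rewrite eq_sym.
Qed.

(* The discriminant of [t |-> L t^2 + 2 g t + L c^2] is nonpositive. *)
Lemma normr_le_of_quadratic_ge0 (R : realType) (g c L : R) : 0 <= L ->
  (forall t, 0 <= t * g + L / 2 * (c ^+ 2 + t ^+ 2)) -> `|g| <= L * `|c|.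
Proof.
move=> L_ge0 quad_ge0.
have [L0|L_neq0] := eqVneq L 0.
  have := quad_ge0 (- g); rewrite L0 !mul0r addr0 mulNr oppr_ge0 -expr2 => g2_le0.
  have : g ^+ 2 == 0 by rewrite eq_le g2_le0 sqr_ge0.
  by rewrite sqrf_eq0 => /eqP ->; rewrite normr0.
have L_gt0 : 0 < L by rewrite lt_def L_neq0.
rewrite -(@ler_pXn2r _ 2) ?nnegrE ?mulr_ge0 ?normr_ge0 //.
rewrite exprMn !real_normK ?num_real //.
have := quad_ge0 (- g / L); set t := - g / L => q_ge0.
have Lt : L * t = - g by rewrite mulrC divfK.
have := mulr_ge0 (ltW L_gt0) q_ge0.
have -> : L * (t * g + L / 2 * (c ^+ 2 + t ^+ 2)) =
  (L * t) * g + (L ^+ 2 * c ^+ 2 + (L * t) ^+ 2) / 2 by ring.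
rewrite Lt; lra.
Qed.

Section CoordinatewiseMinima.
Variables (R : realType) (n : nat) (f : 'rV[R]_n -> R).
Hypothesis f_diff : forall y, differentiable f y.
Implicit Types (x : 'rV[R]_n) (i j k : 'I_n).
Local Notation e := (ebase R).

Definition swap_min x :=
  forall i j (t : R), i \in I1 x -> f x <= f (x - x 0 i *: e i + t *: e j).

Lemma partial_eq0_of_coord_min x i :
  (forall t : R, f x <= f (x + t *: e i)) -> partial f i x = 0.
Proof. exact: derive_eq0_of_line_min. Qed.

Lemma coord_min_of_swap_min x i : swap_min x -> i \in I1 x ->
  forall t : R, f x <= f (x + t *: e i).
Proof.
by move=> x_min iI1 t; have := x_min i i (x 0 i + t) iI1; rewrite scalerDl addrA subrK.
Qed.

Lemma partial_I0_le_of_swap_min Lij x k i : block_lipschitz f Lij -> swap_min x ->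
  k \in I1 x -> i \in I0 x -> `|partial f i x| <= L2 Lij * `|x 0 k|.
Proof.
move=> Lf x_min kI1 iI0.
have ki : k != i by apply: contraTneq kI1 => ->; rewrite !inE in iI0 *; rewrite iI0.
apply: normr_le_of_quadratic_ge0 (L2_ge0 Lij) _ => t.
have descent := @block_descent R n f Lij x (- x 0 k) t k i ki f_diff Lf.
have := x_min k i t kI1; rewrite -scaleNr -addrA => /le_trans/(_ descent).
rewrite (partial_eq0_of_coord_min (coord_min_of_swap_min x_min kI1)) mulr0 add0r sqrrN.
have := ler_wpM2r (addr_ge0 (sqr_ge0 (x 0 k)) (sqr_ge0 t)) (le_L2 Lij ki); lra.
Qed.

End CoordinatewiseMinima.

Lemma count_gt_sorted_le (R : numDomainType) (c : R) (l : seq R) p :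
  sorted (fun a b : R => b <= a) l -> (p < size l)%N -> nth 0 l p <= c ->
  (count (fun a => c < a)%R l <= p)%N.
Proof.
have ge_trans : transitive (fun a b : R => b <= a).
  by move=> a b d ba db; exact: le_trans db ba.
elim: l p => [|a l IHl] [|p] //= l_sorted p_lt nth_le.
  rewrite (le_gtF nth_le) add0n leqn0 eqn0Ngt -has_count.
  apply/hasPn => b /(allP (order_path_min ge_trans l_sorted)) ba.
  by rewrite /= (le_gtF (le_trans ba nth_le)).
by rewrite -add1n leq_add ?leq_b1 // IHl // (path_sorted l_sorted).
Qed.

Lemma Ms_ge0 (R : realType) n s (x : 'rV[R]_n) : 0 <= Ms s x.
Proof.
rewrite /Ms; set l := sort _ _.
have [p_lt|p_ge] := ltnP s.-1 (size l); last by rewrite nth_default.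
by move: (mem_nth 0 p_lt); rewrite mem_sort => /mapP[i _ ->].
Qed.

Lemma exists_I1_le_Ms (R : realType) n s (x : 'rV[R]_n) :
  (0 < s)%N -> (s <= n)%N -> l0 x = s ->
  exists2 k, k \in I1 x & `|x 0 k| <= Ms s x.
Proof.
move=> s_gt0 s_le_n l0x.
have [/exists_inP //|] := boolP [exists k in I1 x, `|x 0 k| <= Ms s x].
rewrite negb_exists_in => /forall_inP big; exfalso.
pose l := sort (fun a b : R => b <= a) [seq `|x 0 i| | i <- enum 'I_n].
have l_size : size l = n by rewrite size_sort size_map size_enum_ord.
have := @count_gt_sorted_le R (Ms s x) l s.-1 (sort_sorted (fun a b => le_total b a) _).
have s_lt : (s.-1 < size l)%N by rewrite l_size; lia.
move=> /(_ s_lt (lexx _)); apply/negP; rewrite -ltnNge prednK //.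
rewrite (permP (permEl (perm_sort _ _))) count_map.
have -> (P : pred 'I_n) : count P (enum 'I_n) = #|P|.
  by rewrite enumT cardE -size_filter /enum_mem.
rewrite -[X in (X <= _)%N]l0x.
apply/subset_leq_card/fintype.subsetP => i; rewrite !inE => xi.
by have := big i; rewrite inE xi -ltNge; apply.
Qed.

(* Coordinates in supp Z \ supp X add at most [M] each to the left-hand side,
   coordinates in supp X \ supp Z at least [M] each to the right-hand side, and
   there are no more of the former than of the latter. *)
Lemma sum_sqr_le_of_support_threshold (R : realDomainType) (T : finType)
    (X Z V : T -> R) (M : R) :
  (forall l, X l != 0 -> V l = 0) -> 0 <= M ->
  (forall l, V l ^+ 2 <= M) -> (forall l, X l != 0 -> M <= X l ^+ 2) ->
  (#|[set l | Z l != 0%R]| <= #|[set l | X l != 0%R]|)%N ->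
  \sum_l V l ^+ 2 <= \sum_l (Z l - X l + V l) ^+ 2.
Proof.
move=> V_supp M_ge0 V_le X_ge card_le.
set A := [set l | Z l != 0]; set I := [set l | X l != 0].
rewrite -/A -/I in card_le.
rewrite (bigID (mem A)) [X in _ <= X](bigID (mem A)) /=.
rewrite [X in _ <= _ + X](eq_bigr (fun l => X l ^+ 2 + V l ^+ 2)); last first.
  move=> l; rewrite inE negbK => /eqP ->.
  by have [/eqP -> | /V_supp ->] := boolP (X l == 0); rewrite ?expr0n /=; ring.
rewrite big_split /= addrA lerD2r.
have new_le : \sum_(l in A) V l ^+ 2 <= M *+ #|A :\: I|.
  rewrite (big_setID I) /= big1 ?add0r => [|l]; last first.
    by rewrite !inE => /andP[_ /V_supp ->]; rewrite expr0n.
  by rewrite -sumr_const; exact: ler_sum.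
have dropped_ge : M *+ #|I :\: A| <= \sum_(l | l \notin A) X l ^+ 2.
  rewrite (eq_bigl (mem (~: A))) => [|l]; last by rewrite !inE.
  rewrite (big_setID I) /= finset.setIC -finset.setDE -sumr_const.
  apply: ler_wpDr; first by apply: sumr_ge0 => l _; exact: sqr_ge0.
  by apply: ler_sum => l; rewrite !inE => /andP[_ /X_ge].
have card_diff : (#|A :\: I| <= #|I :\: A|)%N.
  by have := cardsID I A; have := cardsID A I; rewrite finset.setIC; lia.
have := ler_wpMn2l M_ge0 card_diff.
have : 0 <= \sum_(l in A) (Z l - X l + V l) ^+ 2 by apply: sumr_ge0 => l _; exact: sqr_ge0.
lra.
Qed.

Section Projection.
Variables (R : realType) (n s : nat).
Implicit Types (x v : 'rV[R]_n).

Lemma enorm_sqr x : enorm x ^+ 2 = \sum_l x 0 l ^+ 2.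
Proof. by rewrite sqr_sqrtr // sumr_ge0 // => l _; exact: sqr_ge0. Qed.

Lemma in_proj_Cs_self x : (l0 x <= s)%N -> in_proj_Cs s x x.
Proof.
split=> // z _; rewrite subrr enorm_sqr big1 ?expr0n ?sqr_ge0 // => l.
by rewrite mxE expr0n.
Qed.

Lemma in_proj_Cs_threshold x v : l0 x = s ->
  (forall k, k \in I1 x -> v 0 k = 0) ->
  (forall k j, k \in I1 x -> `|v 0 j| <= `|x 0 k|) ->
  in_proj_Cs s (x - v) x.
Proof.
move=> l0x v_supp v_le; split=> [|z z_sparse]; first by rewrite l0x.
rewrite !enorm_sqr (eq_bigr (fun l => v 0 l ^+ 2)) => [|l _]; last first.
  by rewrite !mxE; congr (_ ^+ 2); ring.
rewrite [X in _ <= X](eq_bigr (fun l => (z 0 l - x 0 l + v 0 l) ^+ 2)) => [|l _]; last first.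
  by rewrite !mxE; congr (_ ^+ 2); ring.
have sqr_le (a b : R) : `|a| <= `|b| -> a ^+ 2 <= b ^+ 2.
  move=> ab; rewrite -(real_normK (num_real a)) -(real_normK (num_real b)).
  by rewrite lerXn2r ?nnegrE.
apply: (@sum_sqr_le_of_support_threshold _ _ _ _ _ (\big[Num.max/0]_l v 0 l ^+ 2)).
- by move=> l xl; apply: v_supp; rewrite inE.
- exact: bigmax_ge_id.
- by move=> l; apply: le_bigmax.
- move=> l xl; apply: bigmax_le => [|j _]; first exact: sqr_ge0.
  by apply: sqr_le; apply: v_le; rewrite inE.
- by move: z_sparse; rewrite -l0x.
Qed.

End Projection.

(* The global Lipschitz hypotheses on [grad f] only guarantee that constants [Lij]
   exist; the argument uses [block_lipschitz] directly. *)
Theorem theorem2p4 (R : realType) (n s : nat) (f : 'rV[R]_n -> R)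
    (Lij : 'I_n -> 'I_n -> R) (xs : 'rV[R]_n) :
  (forall x, differentiable f x) ->
  continuous (grad f) ->
  (exists Lg : R, forall x y, enorm (grad f x - grad f y) <= Lg * enorm (x - y)) ->
  (0 < s < n)%N ->
  block_lipschitz f Lij ->
  CW_min f s xs ->
  (forall i, i \in I0 xs -> `|partial f i xs| <= L2 Lij * Ms s xs) /\
  (forall i, i \in I1 xs -> partial f i xs = 0) /\
  (0 < L2 Lij -> L_stationary f s (L2 Lij) xs).
Proof.
move=> f_diff _ _ /andP[s_gt0 s_lt_n] Lf [l0_le [[_ coord_min]|[l0_eq x_min]]].
  have grad0 i : partial f i xs = 0 by exact: partial_eq0_of_coord_min.
  have gradE : grad f xs = 0 by apply/rowP => i; rewrite !mxE grad0.
  split; [|split] => [i _|i _|_]; rewrite ?grad0 ?normr0 ?mulr_ge0 ?L2_ge0 ?Ms_ge0 //.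
  by rewrite /L_stationary gradE scaler0 subr0; exact: in_proj_Cs_self l0_le.
have gradI1 i : i \in I1 xs -> partial f i xs = 0.
  by move=> iI1; apply: partial_eq0_of_coord_min (coord_min_of_swap_min x_min iI1).
have gradI0 := partial_I0_le_of_swap_min f_diff Lf x_min.
split; [|split] => // [i iI0|L_gt0].
  have [k kI1 k_le] := exists_I1_le_Ms s_gt0 (ltnW s_lt_n) l0_eq.
  exact: le_trans (gradI0 k i kI1 iI0) (ler_wpM2l (L2_ge0 Lij) k_le).
apply: in_proj_Cs_threshold => // [k kI1|k j kI1]; rewrite mxE.
  by rewrite /grad mxE gradI1 // mulr0.
rewrite /grad mxE normrM normfV (gtr0_norm L_gt0) ler_pdivrMl //.
have [jI1|jI0] := boolP (j \in I1 xs).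
  by rewrite gradI1 // normr0 mulr_ge0 ?normr_ge0 ?ltW.
by apply: gradI0; rewrite // !inE in jI0 *; rewrite negbK in jI0.
Qed.
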